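(* An interval order is better-quasi-ordered if and only if it is well-quasi-ordered.
   Context: A poset $P$ is an interval order if it is isomorphic to a set of nonempty intervals of some chain $C$, ordered by $I<J$ iff $x<y$ for every $x\in I$ and every $y\in J$. A quasi-ordered set is well-quasi-ordered (wqo) if it is well-founded and has no infinite antichain. Barriers and bqo: finite subsets of $\mathbb{N}$ are identified with their increasing enumerations. For finite $s,t\subseteq\mathbb{N}$ write $s\triangleleft t$ if there is a finite $r\subseteq\mathbb{N}$ such that $s$ is a proper initial segment of $r$ and $t$ is $r$ with its least element removed. A barrier is an infinite set $B$ of finite subsets of $\mathbb{N}$, no member of which is a proper subset of another, such that every infinite $X\subseteq\bigcup B$ has a nonempty initial segment belonging to $B$. A barrier is well-ordered by the lexicographic order; its order type is the type of this well-order. A map $f$ from a barrier $B$ into a quasi-ordered set $Q$ is good if there exist $s,t\in B$ with $s\triangleleft t$ and $f(s)\leq f(t)$, and bad otherwise. For a countable ordinal $\alpha$, $Q$ is $\alpha$-bqo if every map from a barrier of order type at most $\alpha$ into $Q$ is good; $Q$ is better-quasi-ordered (bqo) if it is $\alpha$-bqo for every countable ordinal $\alpha$. *)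

From mathcomp Require Import all_boot.
Set Implicit Arguments. Unset Strict Implicit. Unset Printing Implicit Defensive.

Definition quasi_order (T : Type) (le : T -> T -> Prop) : Prop :=
  (forall x, le x x) /\ (forall x y z, le x y -> le y z -> le x z).

Definition partial_order (T : Type) (le : T -> T -> Prop) : Prop :=
  quasi_order le /\ (forall x y, le x y -> le y x -> x = y).

Definition total_order (C : Type) (le : C -> C -> Prop) : Prop :=
  partial_order le /\ (forall a b, le a b \/ le b a).

Definition nonempty_interval (C : Type) (leC : C -> C -> Prop) (I : C -> Prop) :=
  (exists c, I c) /\
  (forall a b c, I a -> I b -> leC a c -> leC c b -> I c).

Definition interval_order (T : Type) (le : T -> T -> Prop) : Prop :=
  partial_order le /\
  exists (C : Type) (leC : C -> C -> Prop) (I : T -> C -> Prop),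
    total_order leC /\
    (forall x, nonempty_interval leC (I x)) /\
    (forall x y, (forall c, I x c <-> I y c) -> x = y) /\
    (forall x y, le x y <->
       (x = y \/ forall a b, I x a -> I y b -> leC a b /\ a <> b)).

Definition strict (T : Type) (le : T -> T -> Prop) (x y : T) : Prop :=
  le x y /\ ~ le y x.

Definition wqo (T : Type) (le : T -> T -> Prop) : Prop :=
  (~ exists f : nat -> T, forall n, strict le (f n.+1) (f n)) /\
  (~ exists f : nat -> T, forall i j, i <> j -> ~ le (f i) (f j)).

(* Finite subsets of nat are identified with strictly increasing lists. *)
Definition fin_nat_set (s : seq nat) : Prop := sorted ltn s.

Definition infinite_nat_set (X : nat -> Prop) : Prop :=
  forall n, exists m, n <= m /\ X m.

Definition nonempty_initial_segment (s : seq nat) (X : nat -> Prop) : Prop :=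
  fin_nat_set s /\ s <> [::] /\
  (forall x, x \in s -> X x) /\
  (forall x, X x -> x <= last 0 s -> x \in s).

Definition barrier (B : seq nat -> Prop) : Prop :=
  (forall s, B s -> fin_nat_set s) /\
  (~ exists l : seq (seq nat), forall s, B s -> s \in l) /\
  (forall s t, B s -> B t -> {subset s <= t} -> {subset t <= s}) /\
  (forall X : nat -> Prop,
      infinite_nat_set X ->
      (forall n, X n -> exists s, B s /\ n \in s) ->
      exists s, B s /\ nonempty_initial_segment s X).

Definition shift_rel (s t : seq nat) : Prop :=
  exists r : seq nat, fin_nat_set r /\
    (exists k, k < size r /\ s = take k r) /\
    r <> [::] /\ t = behead r.

Definition good (T : Type) (le : T -> T -> Prop) (B : seq nat -> Prop)
    (f : seq nat -> T) : Prop :=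
  exists s t, B s /\ B t /\ shift_rel s t /\ le (f s) (f t).

(* bqo: every map from a barrier (of any, necessarily countable, order type)
   into Q is good. *)
Definition bqo (T : Type) (le : T -> T -> Prop) : Prop :=
  forall B : seq nat -> Prop, barrier B -> forall f : seq nat -> T, good le B f.

From mathcomp Require Import all_boot zify.
From Stdlib Require Import Classical ClassicalEpsilon.
Set Implicit Arguments. Unset Strict Implicit. Unset Printing Implicit Defensive.

(* Testing bqo on the barrier of singletons gives wqo.  Conversely, a bad map f
   on a barrier B into a wqo interval order induces, through the member of B
   that is an initial segment of Z, a clopen map h on the infinite subsets Z of
   the base of B with h Z not below h (Z minus its least element).  Interval
   orders are (2+2)-free, so strict up-sets form a chain, which cannot grow
   strictly forever in a wqo.  With the Galvin-Prikry theorem one fixes the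
   elements w_0 < w_1 < ... of a limit set W one at a time, together with
   reservoirs Y_k, such that for Z inside Y_k the value h Z only depends on the
   first m(w_0 .. w_(k-1) Z) - k entries of Z, m being the modulus of
   continuity of h.  At k = m(W) the map h no longer depends on Z at all, so
   h Y_k = h (shift Y_k), contradicting badness. *)

(** * Infinite subsets of nat *)

(* An infinite subset of nat is represented by its increasing enumeration;
   [infsub A B] says that A enumerates an infinite subset of the set enumerated by B. *)
Definition increasing (f : nat -> nat) := forall i, f i < f i.+1.
Definition infsub (A B : nat -> nat) := increasing A /\ forall i, exists j, A i = B j.

Definition shift (f : nat -> nat) i := f i.+1.
Definition shiftn k (f : nat -> nat) i := f (k + i).
Definition agree p (f g : nat -> nat) := forall i, i < p -> f i = g i.
Definition prepend (s : seq nat) (f : nat -> nat) i :=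
  if i < size s then nth 0 s i else f (i - size s).

Section Increasing.
Variable f : nat -> nat.
Hypothesis f_incr : increasing f.

Lemma increasing_leE : {mono f : i j / i <= j}.
Proof. exact/leq_mono/(homo_ltn ltn_trans). Qed.

Lemma increasing_ltE : {mono f : i j / i < j}.
Proof. exact/leqW_mono/increasing_leE. Qed.

Lemma increasing_inj : injective f.
Proof. exact/incn_inj/increasing_leE. Qed.

Lemma increasing_ge_id i : i <= f i.
Proof. by elim: i => // i IH; apply: leq_ltn_trans IH (f_incr i). Qed.

Lemma increasing_shift : increasing (shift f).
Proof. by move=> i; apply: f_incr. Qed.

Lemma increasing_shiftn k : increasing (shiftn k f).
Proof. by move=> i; rewrite /shiftn addnS; apply: f_incr. Qed.

Lemma increasing_comp g : increasing g -> increasing (f \o g).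
Proof. by move=> g_incr i; rewrite /= increasing_ltE. Qed.

Lemma infsub_refl : infsub f f.
Proof. by split=> // i; exists i. Qed.

Lemma infsub_shift : infsub (shift f) f.
Proof. by split=> [|i]; [exact: increasing_shift | exists i.+1]. Qed.

Lemma infsub_shiftn k : infsub (shiftn k f) f.
Proof. by split=> [|i]; [exact: increasing_shiftn | exists (k + i)]. Qed.

Lemma infsub_comp g : increasing g -> infsub (f \o g) f.
Proof. by move=> g_incr; split=> [|i]; [exact: increasing_comp | exists (g i)]. Qed.

Lemma infsub_id : infsub f id.
Proof. by split=> // i; exists (f i). Qed.

End Increasing.

Lemma infsub_trans A B C : infsub A B -> infsub B C -> infsub A C.
Proof.
move=> [A_incr AB] [_ BC]; split=> // i.
by have [j ->] := AB i; apply: BC.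
Qed.

Lemma infsub_eqfun A A' B : infsub A B -> A =1 A' -> infsub A' B.
Proof. by move=> [A_incr AB] eqA; split=> [i|i]; rewrite -!eqA. Qed.

Lemma infsub_eqfunr A B B' : infsub A B -> B =1 B' -> infsub A B'.
Proof. by move=> [A_incr AB] eqB; split=> // i; have [j ->] := AB i; exists j. Qed.

Lemma infsub_shift_sub A B : infsub A B -> infsub (shift A) B.
Proof. by move=> AB; apply: (infsub_trans _ AB); apply/infsub_shift/AB.1. Qed.

Lemma infsub_shiftn_sub k A B : infsub A B -> infsub (shiftn k A) B.
Proof. by move=> AB; apply: (infsub_trans _ AB); apply/infsub_shiftn/AB.1. Qed.

Lemma infsub_index A B : infsub A B -> increasing B ->
  exists2 k, increasing k & A =1 B \o k.
Proof.
move=> [A_incr AB] B_incr.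
have AB' i : exists j, A i == B j by have [j ->] := AB i; exists j.
have Ek i : A i = B (xchoose (AB' i)) by apply/eqP/(xchooseP (AB' i)).
exists (fun i => xchoose (AB' i)) => i; last exact: Ek.
by rewrite -(increasing_ltE B_incr) -!Ek.
Qed.

Lemma agreeW p q f g : q <= p -> agree p f g -> agree q f g.
Proof. by move=> qp fg i iq; apply/fg/(leq_trans iq qp). Qed.

Lemma agree_sym p f g : agree p f g -> agree p g f.
Proof. by move=> fg i ip; rewrite fg. Qed.

Lemma agree_trans p f g h : agree p f g -> agree p g h -> agree p f h.
Proof. by move=> fg gh i ip; rewrite fg ?gh. Qed.

Lemma mkseq_agree p f g : agree p f g -> mkseq f p = mkseq g p.
Proof. by move=> fg; apply/eq_in_map => i; rewrite mem_iota add0n => /fg. Qed.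

Lemma mem_mkseqP (f : nat -> nat) q x : reflect (exists2 i, i < q & x = f i) (x \in mkseq f q).
Proof.
apply: (iffP mapP) => [[i]|[i iq ->]]; last by exists i; rewrite ?mem_iota.
by rewrite mem_iota add0n => /andP[_ iq] ->; exists i.
Qed.

Lemma mkseq_f (f : nat -> nat) q i : i < q -> f i \in mkseq f q.
Proof. by move=> iq; apply/mem_mkseqP; exists i. Qed.

Lemma sorted_mkseq f q : increasing f -> sorted ltn (mkseq f q).
Proof.
by move=> f_incr; apply: homo_sorted (iota_ltn_sorted 0 q); apply: homo_ltn ltn_trans _.
Qed.

Lemma prepend_nil f : prepend [::] f =1 f.
Proof. by move=> i; rewrite /prepend subn0. Qed.

Lemma prepend_eqfun s f g : f =1 g -> prepend s f =1 prepend s g.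
Proof. by move=> fg i; rewrite /prepend fg. Qed.

Lemma prepend_agree s f g r : agree r f g -> agree (size s + r) (prepend s f) (prepend s g).
Proof.
move=> fg i ir; rewrite /prepend; case: ifP => // /negbT; rewrite -leqNgt => si.
by apply: fg; rewrite ltn_subLR.
Qed.

Lemma prepend_rcons s x g : g 0 = x -> prepend s g =1 prepend (rcons s x) (shift g).
Proof.
move=> g0 i; rewrite /prepend /shift size_rcons nth_rcons.
case: (ltngtP i (size s)) => [lt_is|lt_si|->]; last by rewrite ltnSn subnn.
  by rewrite ltnS ltnW.
by rewrite ltnNge lt_si /= subnSK.
Qed.

Lemma shift_prepend1 w f : shift (prepend [:: w] f) =1 f.
Proof. by move=> i; rewrite /shift /prepend /= subn1. Qed.

Lemma prepend_rcons1 s w f : prepend (rcons s w) f =1 prepend s (prepend [:: w] f).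
Proof.
move=> i; rewrite (@prepend_rcons s w (prepend [:: w] f)) //.
by apply: prepend_eqfun => j; rewrite shift_prepend1.
Qed.

Lemma agree_prepend_mkseq f q g : agree q f (prepend (mkseq f q) g).
Proof. by move=> i iq; rewrite /prepend size_mkseq iq nth_mkseq. Qed.

Lemma prepend_mkseq_shiftn f g q : agree q f g -> prepend (mkseq f q) (shiftn q g) =1 g.
Proof.
move=> fg i; rewrite /prepend size_mkseq; case: ltnP => [iq|qi].
  by rewrite nth_mkseq ?fg.
by rewrite /shiftn subnKC.
Qed.

Lemma increasing_prepend s f : sorted ltn s -> increasing f ->
  (forall x, x \in s -> x < f 0) -> increasing (prepend s f).
Proof.
move=> s_sorted f_incr s_lt i; rewrite /prepend.
case: (ltnP i.+1 (size s)) => [Sis|siS].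
  have lt_is := ltn_trans (ltnSn i) Sis.
  by rewrite lt_is; apply: (sorted_ltn_nth ltn_trans 0 s_sorted).
case: (ltnP i (size s)) => [lt_is|le_si]; last by rewrite subSn //; apply: f_incr.
have -> : i.+1 - size s = 0 by apply/eqP; rewrite subn_eq0.
by apply/s_lt/mem_nth.
Qed.

Lemma infsub_prepend s f W : increasing (prepend s f) ->
  (forall x, x \in s -> exists j, x = W j) -> infsub f W -> infsub (prepend s f) W.
Proof.
move=> sf_incr sW [_ fW]; split=> // i; rewrite /prepend.
by case: ifP => [lt_is|_]; [apply/sW/mem_nth | apply: fW].
Qed.

Lemma infsub_prepend_mkseq W q g : increasing W -> infsub g (shiftn q W) ->
  infsub (prepend (mkseq W q) g) W.
Proof.
move=> W_incr gW; apply: infsub_prepend; last exact: infsub_trans gW (infsub_shiftn W_incr q).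
  apply: increasing_prepend; [exact: sorted_mkseq | exact: gW.1 |].
  move=> _ /mem_mkseqP[i iq ->]; have [j ->] := gW.2 0.
  by rewrite /shiftn (increasing_ltE W_incr) ltn_addr.
by move=> _ /mem_mkseqP[i _ ->]; exists i.
Qed.

(** * Clopen maps *)

(* Continuity into a discrete space, for the product topology on [V]^omega. *)
Definition clopen_map X (F : (nat -> nat) -> X) V :=
  forall Z, infsub Z V -> exists p, forall Z', infsub Z' V -> agree p Z Z' -> F Z' = F Z.

Definition clopen_pred (c : (nat -> nat) -> Prop) V :=
  forall Z, infsub Z V -> exists p, forall Z', infsub Z' V -> agree p Z Z' -> (c Z' <-> c Z).

Definition continuous_into (P : (nat -> nat) -> nat -> nat) W V :=
  (forall Z, infsub Z W -> infsub (P Z) V) /\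
  (forall Z p, infsub Z W ->
     exists r, forall Z', infsub Z' W -> agree r Z Z' -> agree p (P Z) (P Z')).

Section ClopenMaps.
Variables (X : Type) (F : (nat -> nat) -> X) (V : nat -> nat).
Hypothesis F_clopen : clopen_map F V.

Lemma clopen_map_eqfun Z Z' : infsub Z V -> Z =1 Z' -> F Z' = F Z.
Proof.
move=> ZV eqZ; have [p Fp] := F_clopen ZV.
by apply: Fp => [|i _]; [exact: infsub_eqfun eqZ | rewrite eqZ].
Qed.

Lemma clopen_map_sub Y : infsub Y V -> clopen_map F Y.
Proof.
move=> YV Z ZY; have [p Fp] := F_clopen (infsub_trans ZY YV).
by exists p => Z' Z'Y; apply/Fp/(infsub_trans Z'Y YV).
Qed.

Lemma clopen_map_shift : clopen_map (fun Z => F (shift Z)) V.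
Proof.
move=> Z ZV; have [p Fp] := F_clopen (infsub_shift_sub ZV).
exists p.+1 => Z' Z'V ZZ'; apply: Fp; first exact: infsub_shift_sub.
by move=> i ip; apply: ZZ'.
Qed.

Lemma clopen_pred_rel Y (G : (nat -> nat) -> Y) (R : X -> Y -> Prop) :
  clopen_map G V -> clopen_pred (fun Z => R (F Z) (G Z)) V.
Proof.
move=> G_clopen Z ZV; have [p Fp] := F_clopen ZV; have [q Gq] := G_clopen _ ZV.
exists (maxn p q) => Z' Z'V ZZ'.
by rewrite Fp ?Gq //; apply: agreeW ZZ'; rewrite ?leq_maxl ?leq_maxr.
Qed.

Lemma clopen_map_comp P W : continuous_into P W V -> clopen_map (fun Z => F (P Z)) W.
Proof.
move=> [PWV Pcont] Z ZW; have [p Fp] := F_clopen (PWV Z ZW).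
have [r Pr] := Pcont Z p ZW.
by exists r => Z' Z'W ZZ'; apply: Fp (PWV _ Z'W) (Pr _ Z'W ZZ').
Qed.

End ClopenMaps.

Lemma clopen_pred_eqfun c V Z Z' : clopen_pred c V -> infsub Z V -> Z =1 Z' -> (c Z' <-> c Z).
Proof.
move=> c_clopen ZV eqZ; have [p cp] := c_clopen Z ZV.
by apply: cp => [|i _]; [exact: infsub_eqfun eqZ | rewrite eqZ].
Qed.

Lemma sorted_rcons_ltn s k :
  sorted ltn (rcons s k) = sorted ltn s && all (fun x => x < k) s.
Proof.
rewrite -cats1 !(sorted_pairwise ltn_trans) pairwise_cat allrel1r /=.
by rewrite andbT andbC.
Qed.

Lemma sorted_rcons s k : sorted ltn s -> (forall x, x \in s -> x < k) ->
  sorted ltn (rcons s k).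
Proof. by move=> s_sorted s_lt; rewrite sorted_rcons_ltn s_sorted; apply/allP. Qed.

Lemma sorted_rcons_lt s k x : sorted ltn (rcons s k) -> x \in s -> x < k.
Proof. by rewrite sorted_rcons_ltn => /andP[_ /allP]; apply. Qed.

Lemma sorted_subseq_iota s k : sorted ltn s -> (forall x, x \in s -> x < k) ->
  subseq s (iota 0 k).
Proof.
move=> s_sorted s_lt; suff -> : s = filter (mem s) (iota 0 k) by apply: filter_subseq.
apply: (irr_sorted_eq ltn_trans ltnn) => //.
  exact/sorted_filter/iota_ltn_sorted/ltn_trans.
move=> x; rewrite mem_filter mem_iota /= add0n.
by case xs: (x \in s) => //=; rewrite s_lt.
Qed.

Fixpoint subseqs (s : seq nat) : seq (seq nat) :=
  if s is x :: s' then [seq x :: t | t <- subseqs s'] ++ subseqs s' else [:: [::]].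

Lemma mem_subseqs t s : (t \in subseqs s) = subseq t s.
Proof.
elim: s t => [|x s IH] [|y t] //=; rewrite mem_cat IH ?sub0seq ?orbT //.
case: eqVneq => [->|neq_yx].
  have cons_inj : injective (cons x) by move=> ? ? [].
  rewrite (mem_map cons_inj) IH.
  by apply/idP/idP => [/orP[] // /(subseq_trans (subseq_cons t x))|->].
suff -> : (y :: t \in [seq x :: t' | t' <- subseqs s]) = false by [].
by apply/mapP => -[t' _ [eq_yx _]]; rewrite eq_yx eqxx in neq_yx.
Qed.

Lemma subseq_rcons_cases (s t : seq nat) x : subseq s (rcons t x) ->
  subseq s t \/ exists2 s', s = rcons s' x & subseq s' t.
Proof.
rewrite -subseq_rev rev_rcons; case rev_s: (rev s) => [|y r].
  by move=> _; left; rewrite -(revK s) rev_s sub0seq.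
rewrite /=; case: eqP => [eq_yx|_] sub_s; last by left; rewrite -subseq_rev rev_s.
right; exists (rev r); first by rewrite -(revK s) rev_s -eq_yx rev_cons.
by rewrite -subseq_rev revK.
Qed.

Definition ubound (s : seq nat) := \max_(x <- s) x.+1.

Lemma ubound_gt s x : x \in s -> x < ubound s.
Proof. by move=> xs; apply: (leq_bigmax_seq x). Qed.

Lemma ubound_leq s k : (forall x, x \in s -> x < k) -> ubound s <= k.
Proof. by move=> s_lt; apply/bigmax_leqP_seq => x xs _; apply: s_lt. Qed.

Lemma ubound_rcons s j : sorted ltn (rcons s j) -> ubound (rcons s j) = j.+1.
Proof.
move=> s_sorted; apply/eqP; rewrite eqn_leq ubound_gt ?mem_rcons ?mem_head // andbT.
apply: ubound_leq => x; rewrite mem_rcons inE => /predU1P[->//|xs].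
exact/ltnW/(sorted_rcons_lt s_sorted).
Qed.

Fixpoint climb (e : nat -> nat) i := if i is i'.+1 then e (climb e i').+1 else e 0.

Lemma climb_increasing e : (forall J, J <= e J) -> increasing (climb e).
Proof. by move=> e_ge i /=; apply: e_ge. Qed.

Lemma climb_range e i : exists J, climb e i = e J.
Proof. by case: i => [|i] /=; eexists. Qed.

Lemma ex_minimal (P : nat -> Prop) : (exists n, P n) -> exists n, P n /\ forall k, P k -> n <= k.
Proof.
move=> [n Pn]; apply: NNPP => no_min.
suff : forall j k, k < j -> ~ P k by move/(_ n.+1 n (ltnSn n)).
elim=> // j IH k kj Pk; apply: no_min; exists k; split=> // l Pl.
by rewrite leqNgt; apply/negP => lk; apply: (IH l) => //; apply: leq_trans lk kj.
Qed.

(** * The Galvin-Prikry theorem for clopen sets *)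

Section GalvinPrikryId.
Variable c : (nat -> nat) -> Prop.
Hypothesis c_clopen : clopen_pred c id.

Definition accepts s M := forall g, infsub g M -> c (prepend s g).
Definition rejects s M := forall N, infsub N M -> ~ accepts s N.
Definition decides s M := accepts s M \/ rejects s M.

Lemma accepts_sub s M N : accepts s M -> infsub N M -> accepts s N.
Proof. by move=> acc NM g gN; apply/acc/(infsub_trans gN). Qed.

Lemma rejects_sub s M N : rejects s M -> infsub N M -> rejects s N.
Proof. by move=> rej NM N' N'N; apply/rej/(infsub_trans N'N). Qed.

Lemma decides_sub s M N : decides s M -> infsub N M -> decides s N.
Proof.
by move=> [acc|rej] NM; [left; apply: accepts_sub acc NM | right; apply: rejects_sub rej NM].
Qed.

Lemma decides_refine s M : increasing M -> exists2 N, infsub N M & decides s N.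
Proof.
move=> M_incr; case: (classic (exists2 N, infsub N M & accepts s N)) => [[N NM acc]|no_acc].
  by exists N; last left.
by exists M; [exact: infsub_refl | right=> N NM acc; apply: no_acc; exists N].
Qed.

Lemma decides_refine_all (L : seq (seq nat)) M : increasing M ->
  exists2 N, infsub N M & forall s, s \in L -> decides s N.
Proof.
elim: L M => [|s L IH] M M_incr; first by exists M; first exact: infsub_refl.
have [N1 N1M decL] := IH M M_incr; have [N2 N2N1 dec_s] := decides_refine s N1M.1.
exists N2 => [|t]; first exact: infsub_trans N2N1 N1M.
by rewrite inE => /predU1P[->//|tL]; apply: decides_sub (decL t tL) N2N1.
Qed.

Definition refine_deciding (L : seq (seq nat)) M :=
  epsilon (inhabits M) (fun N => infsub N M /\ forall s, s \in L -> decides s N).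

Lemma refine_decidingP L M : increasing M ->
  infsub (refine_deciding L M) M /\ forall s, s \in L -> decides s (refine_deciding L M).
Proof.
move=> M_incr; apply: (epsilon_spec (inhabits M) (fun N => infsub N M /\ _)).
by have [N NM decN] := decides_refine_all L M_incr; exists N.
Qed.

(* Stage k of the fusion fixes the first k diagonal elements and decides every
   subsequence of them extended by the next diagonal element. *)
Fixpoint fusion k : seq nat * (nat -> nat) :=
  if k is k'.+1 then
    (rcons (fusion k').1 ((fusion k').2 0),
     refine_deciding [seq rcons s ((fusion k').2 0) | s <- subseqs (fusion k').1]
                     (shift (fusion k').2))
  else ([::], refine_deciding [:: [::]] id).

Definition diag k := (fusion k).2 0.

Lemma fusion_succ k :
  increasing (fusion k).2 /\ infsub (fusion k.+1).2 (shift (fusion k).2).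
Proof.
have refine_shift L M : increasing M -> infsub (refine_deciding L (shift M)) (shift M).
  by move=> M_incr; apply: (refine_decidingP L (increasing_shift M_incr)).1.
elim: k => [|k [_ sub_k]]; last by split; [exact: sub_k.1 | apply/refine_shift/sub_k.1].
have incr0 : increasing (fusion 0).2 by apply: (refine_decidingP _ (fun i => ltnSn i)).1.1.
by split; last exact: refine_shift.
Qed.

Lemma fusion_increasing k : increasing (fusion k).2.
Proof. exact: (fusion_succ k).1. Qed.

Lemma fusion_sub k d : infsub (fusion (k + d)).2 (fusion k).2.
Proof.
elim: d => [|d IH]; first by rewrite addn0; apply/infsub_refl/fusion_increasing.
rewrite addnS; apply: infsub_trans IH; apply: infsub_trans (fusion_succ _).2 _.
exact/infsub_shift/fusion_increasing.
Qed.

Lemma diag_increasing : increasing diag.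
Proof.
move=> k; rewrite /diag; have [j ->] := (fusion_succ k).2.2 0.
by rewrite /shift (increasing_ltE (fusion_increasing k)).
Qed.

Lemma infsub_diag_shiftn k : infsub (shiftn k diag) (fusion k).2.
Proof.
split=> [|i]; first exact: increasing_shiftn diag_increasing k.
by have [j eq_ij] := (fusion_sub k i).2 0; exists j; rewrite /shiftn /diag eq_ij.
Qed.

Lemma fusion_prefix k : (fusion k).1 = mkseq diag k.
Proof. by elim: k => // k IH; rewrite mkseqS -IH. Qed.

Lemma diag_decides_nil : decides [::] diag.
Proof.
have dec0 := (refine_decidingP [:: [::]] (fun i => ltnSn i)).2 [::] (mem_head _ _).
apply: decides_sub dec0 _; apply: infsub_eqfun (infsub_diag_shiftn 0) _.
by move=> i; rewrite /shiftn add0n.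
Qed.

Lemma diag_decides xs k : sorted ltn (rcons xs k) ->
  decides (map diag (rcons xs k)) (shiftn k.+1 diag).
Proof.
move=> xs_sorted; have xs_lt := sorted_rcons_lt xs_sorted.
have xs_sub : subseq xs (iota 0 k).
  by apply: sorted_subseq_iota => //; move: xs_sorted; rewrite sorted_rcons_ltn => /andP[].
have in_L : map diag (rcons xs k) \in
    [seq rcons s ((fusion k).2 0) | s <- subseqs (fusion k).1].
  rewrite map_rcons; apply: (map_f (fun s => rcons s ((fusion k).2 0))).
  by rewrite mem_subseqs fusion_prefix; apply: map_subseq.
have := (refine_decidingP _ (increasing_shift (fusion_increasing k))).2 _ in_L.
by move/decides_sub; apply; apply: infsub_diag_shiftn.
Qed.

Definition rejected xs := rejects (map diag xs) (shiftn (ubound xs) diag).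

Lemma sorted_map_diag xs : sorted ltn xs -> sorted ltn (map diag xs).
Proof. by apply: homo_sorted; apply: homo_ltn ltn_trans diag_increasing. Qed.

Lemma accepts_of_extensions xs (ks : nat -> nat) : sorted ltn xs -> increasing ks ->
  (forall i, ubound xs <= ks i) ->
  (forall i, accepts (map diag (rcons xs (ks i))) (shiftn (ks i).+1 diag)) ->
  accepts (map diag xs) (diag \o ks).
Proof.
move=> xs_sorted ks_incr ks_ge acc_ks g g_sub.
have [kk kk_incr eq_g] := infsub_index g_sub (increasing_comp diag_increasing ks_incr).
have shift_g : infsub (shift g) (shiftn (ks (kk 0)).+1 diag).
  split=> [|i]; first exact/increasing_shift/g_sub.1.
  exists (ks (kk i.+1) - (ks (kk 0)).+1); rewrite /shift /shiftn eq_g /= subnKC //.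
  by rewrite (increasing_ltE ks_incr) (increasing_ltE kk_incr).
have g_incr : increasing (prepend (map diag xs) g).
  apply: increasing_prepend; [exact: sorted_map_diag | exact: g_sub.1 |].
  move=> _ /mapP[x xs_x ->]; rewrite eq_g /= (increasing_ltE diag_increasing).
  exact: leq_trans (ubound_gt xs_x) (ks_ge _).
apply/(clopen_pred_eqfun c_clopen (infsub_id g_incr) (prepend_rcons _ (eq_g 0))).
by rewrite -map_rcons; apply: acc_ks.
Qed.

(* Otherwise infinitely many one-point extensions of xs are accepted, and then
   so is xs itself (accepts_of_extensions). *)
Lemma rejected_rcons xs : sorted ltn xs -> rejected xs ->
  exists J, forall j, J <= j -> ubound xs <= j -> rejected (rcons xs j).
Proof.
move=> xs_sorted xs_rej; apply: NNPP => no_J.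
have many_acc J : exists j, [/\ J <= j, ubound xs <= j &
                             accepts (map diag (rcons xs j)) (shiftn j.+1 diag)].
  apply: NNPP => no_j; apply: no_J; exists J => j Jj xs_j.
  have xsj_sorted : sorted ltn (rcons xs j).
    by apply: sorted_rcons => // x /ubound_gt /leq_trans; apply.
  rewrite /rejected (ubound_rcons xsj_sorted).
  by case: (diag_decides xsj_sorted) => // acc; case: no_j; exists j.
pose e J := epsilon (inhabits 0) (fun j => [/\ J <= j, ubound xs <= j &
                     accepts (map diag (rcons xs j)) (shiftn j.+1 diag)]).
have eP J : [/\ J <= e J, ubound xs <= e J &
                accepts (map diag (rcons xs (e J))) (shiftn (e J).+1 diag)].
  exact: (epsilon_spec (inhabits 0) (fun j => [/\ _, _ & _]) (many_acc J)).
have ks_incr : increasing (climb e) by apply: climb_increasing => J; case: (eP J).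
have climbP i : ubound xs <= climb e i /\
                accepts (map diag (rcons xs (climb e i))) (shiftn (climb e i).+1 diag).
  by have [J ->] := climb_range e i; case: (eP J).
apply: (xs_rej (diag \o climb e)).
  split=> [|i]; first exact: (increasing_comp diag_increasing ks_incr).
  by exists (climb e i - ubound xs); rewrite /shiftn subnKC //; case: (climbP i).
by apply: accepts_of_extensions => // i; case: (climbP i).
Qed.

Lemma rejected_rcons_all (L : seq (seq nat)) :
  (forall xs, xs \in L -> sorted ltn xs /\ rejected xs) ->
  exists J, forall xs, xs \in L -> forall j, J <= j -> ubound xs <= j -> rejected (rcons xs j).
Proof.
elim: L => [|xs L IH] L_rej; first by exists 0.
case: IH => [ys ys_L|J0 J0_rej]; first by apply: L_rej; rewrite inE ys_L orbT.
have [xs_sorted xs_rej] := L_rej xs (mem_head _ _).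
have [J1 J1_rej] := rejected_rcons xs_sorted xs_rej.
exists (maxn J0 J1) => ys; rewrite inE => /predU1P[->|ys_L] j Jj ys_j.
  by apply: J1_rej => //; apply: leq_trans Jj; apply: leq_maxr.
by apply: J0_rej => //; apply: leq_trans Jj; apply: leq_maxl.
Qed.

Definition rejected_subseqs pre := sorted ltn pre /\ forall xs, subseq xs pre -> rejected xs.

Lemma rejected_subseqs_rcons pre : rejected_subseqs pre ->
  exists j, ubound pre <= j /\ rejected_subseqs (rcons pre j).
Proof.
move=> [pre_sorted pre_rej].
case: (@rejected_rcons_all (subseqs pre)) => [xs|J J_rej].
  rewrite mem_subseqs => xs_pre; split; last exact: pre_rej.
  exact: (subseq_sorted ltn_trans xs_pre pre_sorted).
have ub_lt x : x \in pre -> x < maxn J (ubound pre).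
  by move/ubound_gt/leq_trans; apply; apply: leq_maxr.
exists (maxn J (ubound pre)); split; first exact: leq_maxr.
split; first exact: sorted_rcons.
move=> xs /subseq_rcons_cases[xs_pre|[xs' -> xs'_pre]]; first exact: pre_rej.
apply: J_rej; [by rewrite mem_subseqs | exact: leq_maxl |].
by apply: ubound_leq => x /(mem_subseq xs'_pre); apply: ub_lt.
Qed.

Definition next_rejected pre :=
  epsilon (inhabits 0) (fun j => ubound pre <= j /\ rejected_subseqs (rcons pre j)).

Fixpoint rejected_prefix k :=
  if k is k'.+1 then rcons (rejected_prefix k') (next_rejected (rejected_prefix k'))
  else [::].

Definition rejected_seq k := next_rejected (rejected_prefix k).

Lemma next_rejectedP pre : rejected_subseqs pre ->
  ubound pre <= next_rejected pre /\ rejected_subseqs (rcons pre (next_rejected pre)).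
Proof.
move=> pre_rej.
exact: (epsilon_spec (inhabits 0) (fun j => _ /\ _) (rejected_subseqs_rcons pre_rej)).
Qed.

Lemma rejected_prefix_mkseq k : rejected_prefix k = mkseq rejected_seq k.
Proof. by elim: k => // k IH; rewrite mkseqS -IH. Qed.

Section RejectedNil.
Hypothesis nil_rejected : rejected [::].

Lemma rejected_prefix_rejected k : rejected_subseqs (rejected_prefix k).
Proof.
elim: k => [|k IH]; last exact: (next_rejectedP IH).2.
by split=> // xs; rewrite subseq0 => /eqP->.
Qed.

Lemma rejected_seq_increasing : increasing rejected_seq.
Proof.
move=> k; have [ub_lt _] := next_rejectedP (rejected_prefix_rejected k.+1).
by apply: leq_trans ub_lt; apply: ubound_gt; rewrite /= mem_rcons mem_head.
Qed.

Lemma rejected_mkseq kk p : increasing kk -> rejected (mkseq (rejected_seq \o kk) p).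
Proof.
move=> kk_incr; apply: (rejected_prefix_rejected (kk p)).2.
rewrite rejected_prefix_mkseq /mkseq map_comp; apply: map_subseq.
apply: sorted_subseq_iota; first exact: sorted_mkseq.
by move=> _ /mem_mkseqP[i ip ->]; rewrite (increasing_ltE kk_incr).
Qed.

(* If c g held, it would be decided by a finite prefix of g, which is rejected. *)
Lemma diag_rejected_seq_avoids g : infsub g (diag \o rejected_seq) -> ~ c g.
Proof.
move=> g_sub cg; have z_incr := rejected_seq_increasing.
have [kk kk_incr eq_g] := infsub_index g_sub (increasing_comp diag_increasing z_incr).
have [p cp] := c_clopen (infsub_id g_sub.1).
set xs := mkseq (rejected_seq \o kk) p.
have xs_lt i : ubound xs <= rejected_seq (kk (p + i)).
  apply: ubound_leq => _ /mem_mkseqP[j jp ->].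
  by rewrite /= (increasing_ltE z_incr) (increasing_ltE kk_incr) ltn_addr.
have diag_xs : map diag xs = mkseq g p.
  by rewrite /mkseq -map_comp; apply: eq_map => i; rewrite eq_g.
apply: (rejected_mkseq (p := p) (N := shiftn p g) kk_incr).
  split=> [|i]; first exact: increasing_shiftn g_sub.1 p.
  by exists (rejected_seq (kk (p + i)) - ubound xs); rewrite /shiftn eq_g /= subnKC.
move=> g' g'_sub; rewrite diag_xs.
have g'_incr := (infsub_prepend_mkseq g_sub.1 g'_sub).1.
exact: (cp _ (infsub_id g'_incr) (@agree_prepend_mkseq g p g')).2 cg.
Qed.

End RejectedNil.

Theorem clopen_homogeneous_id : exists2 N, increasing N &
  (forall g, infsub g N -> c g) \/ (forall g, infsub g N -> ~ c g).
Proof.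
case: diag_decides_nil => [acc|rej].
  exists diag; first exact: diag_increasing.
  left=> g g_sub; have := acc g g_sub.
  by move/(clopen_pred_eqfun c_clopen (infsub_id g_sub.1) (fsym (prepend_nil g))).
have nil_rejected : rejected [::].
  exact: (rejects_sub rej (infsub_shiftn diag_increasing _)).
exists (diag \o rejected_seq); last by right; apply: diag_rejected_seq_avoids.
exact: (increasing_comp diag_increasing (rejected_seq_increasing nil_rejected)).
Qed.

End GalvinPrikryId.

Theorem galvin_prikry c V : increasing V -> clopen_pred c V ->
  exists2 V', infsub V' V & (forall Z, infsub Z V' -> c Z) \/ (forall Z, infsub Z V' -> ~ c Z).
Proof.
move=> V_incr c_clopen; pose cV g := c (V \o g).
have cV_clopen : clopen_pred cV id.
  move=> g g_sub; have [p cp] := c_clopen _ (infsub_comp V_incr g_sub.1).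
  exists p => g' g'_sub gg'; apply: cp; first exact: (infsub_comp V_incr g'_sub.1).
  by move=> i ip; rewrite /= gg'.
have [N N_incr hom] := clopen_homogeneous_id cV_clopen.
have VN_incr := increasing_comp V_incr N_incr.
have lift Z : infsub Z (V \o N) -> exists2 g, infsub g N & (cV g <-> c Z).
  move=> Z_sub; have [kk kk_incr eq_Z] := infsub_index Z_sub VN_incr.
  exists (N \o kk); first exact: (infsub_comp N_incr kk_incr).
  exact: (clopen_pred_eqfun c_clopen (infsub_trans Z_sub (infsub_comp V_incr N_incr)) eq_Z).
exists (V \o N); first exact: (infsub_comp V_incr N_incr).
case: hom => hom; [left|right] => Z Z_sub; have [g g_sub cgZ] := lift Z Z_sub.
  by apply/cgZ/hom.
by move/cgZ; apply: hom.
Qed.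

Section ShiftInvariant.
Variables (X : Type) (F : (nat -> nat) -> X) (W : nat -> nat).
Hypothesis F_clopen : clopen_map F W.
Hypothesis F_shift : forall Z, infsub Z W -> F (shift Z) = F Z.

Lemma clopen_shiftn_invariant k Z : infsub Z W -> F (shiftn k Z) = F Z.
Proof.
elim: k Z => [|k IH] Z ZW.
  by apply: (clopen_map_eqfun F_clopen ZW) => i; rewrite /shiftn add0n.
have ZkW := infsub_shiftn_sub k ZW.
rewrite -(IH _ ZW) -(F_shift ZkW); apply: (clopen_map_eqfun F_clopen (infsub_shift_sub ZkW)).
by move=> i; rewrite /shift /shiftn addnS addSn.
Qed.

(* Glue a long enough prefix of Z1 to a far tail of Z2. *)
Lemma clopen_shift_invariant_constant Z1 Z2 : infsub Z1 W -> infsub Z2 W -> F Z1 = F Z2.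
Proof.
move=> Z1W Z2W; have [p Fp] := F_clopen Z1W.
pose Z3 := prepend (mkseq Z1 p) (shiftn (Z1 p) Z2).
have Z3W : infsub Z3 W.
  apply: infsub_prepend; last exact: infsub_shiftn_sub.
    apply: increasing_prepend; [exact/sorted_mkseq/Z1W.1 | exact/increasing_shiftn/Z2W.1 |].
    move=> _ /mem_mkseqP[i ip ->]; rewrite /shiftn addn0.
    by apply: leq_trans (increasing_ge_id Z2W.1 _); rewrite (increasing_ltE Z1W.1).
  by move=> _ /mem_mkseqP[i _ ->]; apply: Z1W.2.
rewrite -(Fp _ Z3W (@agree_prepend_mkseq Z1 p _)) -(clopen_shiftn_invariant p Z3W).
rewrite -(clopen_shiftn_invariant (Z1 p) Z2W).
apply: (clopen_map_eqfun F_clopen (infsub_shiftn_sub _ Z2W)) => i.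
by rewrite /shiftn /Z3 /prepend size_mkseq ltnNge leq_addr /= addKn.
Qed.

End ShiftInvariant.

Lemma clopen_finite_range_shift_fixed X (F : (nat -> nat) -> X) (L : seq X) W :
  increasing W -> clopen_map F W ->
  (forall Z, infsub Z W -> List.In (F Z) L) -> exists2 Z, infsub Z W & F Z = F (shift Z).
Proof.
elim: L W => [|x L IH] W W_incr F_clopen F_L; first by case: (F_L W (infsub_refl W_incr)).
have [W' W'W [all_x|no_x]] :=
  galvin_prikry W_incr (clopen_pred_rel F_clopen (fun y _ => y = x) F_clopen).
  have W'_incr := W'W.1.
  by exists W' => //; rewrite (all_x _ (infsub_refl W'_incr)) (all_x _ (infsub_shift W'_incr)).
case: (IH W' W'W.1 (clopen_map_sub F_clopen W'W)) => [Z ZW'|Z ZW' FZ].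
  by case: (F_L Z (infsub_trans ZW' W'W)) => // /esym /(no_x Z ZW').
by exists Z => //; apply: infsub_trans ZW' W'W.
Qed.

(** * Interval orders and wqo *)

Definition two_plus_two_free T (le : T -> T -> Prop) :=
  forall x y z w, strict le z x -> strict le w y -> strict le z y \/ strict le w x.

Section Orders.
Variables (T : Type) (le : T -> T -> Prop).

Lemma strict_le_trans a b c : (forall x y z, le x y -> le y z -> le x z) ->
  strict le a b -> le b c -> strict le a c.
Proof.
move=> le_trans [ab not_ba] bc; split=> [|ca]; first exact: le_trans ab bc.
exact: not_ba (le_trans _ _ _ bc ca).
Qed.

Lemma interval_order_two_plus_two_free : interval_order le -> two_plus_two_free le.
Proof.
move=> [[[le_refl le_trans] le_anti] [C [leC [I [leC_order [_ [_ le_I]]]]]]].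
have [[[leC_refl leC_trans] leC_anti] leC_total] := leC_order.
have strict_I a b : strict le a b -> forall p q, I a p -> I b q -> leC p q /\ p <> q.
  by move=> [/le_I[<-|//] /(_ (le_refl a))].
have not_strict_I a b : a <> b -> ~ strict le a b -> exists p q, [/\ I a p, I b q & leC q p].
  move=> neq_ab not_ab; apply: NNPP => no_pq.
  have ab : le a b.
    apply/le_I; right=> p q Ip Iq; have not_qp : ~ leC q p by move=> qp; apply: no_pq; exists p, q.
    by case: (leC_total p q) => // pq; split=> // eq_pq; apply: not_qp; rewrite eq_pq.
  by apply: not_ab; split=> // ba; apply/neq_ab/le_anti.
have strict_trans a b c : strict le a b -> strict le b c -> strict le a c.
  by move=> ab bc; apply: strict_le_trans le_trans ab bc.1.
move=> x y z w zx wy; apply: NNPP => /not_or_and[not_zy not_wx].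
have [eq_zy|neq_zy] := classic (z = y).
  by subst y; apply: not_wx (strict_trans _ _ _ wy zx).
have [eq_wx|neq_wx] := classic (w = x).
  by subst x; apply: not_zy (strict_trans _ _ _ zx wy).
have [p [q [Ip Iq qp]]] := not_strict_I _ _ neq_zy not_zy.
have [p' [q' [Ip' Iq' qp']]] := not_strict_I _ _ neq_wx not_wx.
have [pq' neq_pq'] := strict_I _ _ zx p q' Ip Iq'.
have [p'q _] := strict_I _ _ wy p' q Ip' Iq.
by apply/neq_pq'/leC_anti/(leC_trans _ _ _ (leC_trans _ _ _ qp' p'q) qp).
Qed.

Lemma two_plus_two_free_upsets_total : two_plus_two_free le -> forall a b,
  (forall y, strict le a y -> strict le b y) \/ (forall y, strict le b y -> strict le a y).
Proof.
move=> le_22 a b; apply: NNPP => /not_or_and[not_ab not_ba].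
have [y1 not_y1] := not_all_ex_not _ _ not_ab; have [y2 not_y2] := not_all_ex_not _ _ not_ba.
have [[ay1 not_by1] [by2 not_ay2]] := (imply_to_and _ _ not_y1, imply_to_and _ _ not_y2).
by case: (le_22 _ _ _ _ ay1 by2).
Qed.

Section Wqo.
Hypothesis le_wqo : wqo le.

(* Either eventually every term has a later term below it, which yields a
   strictly descending sequence, or infinitely many terms have none, which
   yields an antichain. *)
Lemma wqo_not_bad (x : nat -> T) : ~ (forall i j, i < j -> ~ le (x i) (x j)).
Proof.
move=> x_bad; have [le_wf le_no_antichain] := le_wqo.
case: (classic (exists N, forall n, N <= n -> exists2 m, n < m & le (x m) (x n))) => [[N down]|].
  have next n : exists m, N <= n -> n < m /\ le (x m) (x n).
    by case: (leqP N n) => [/down[m nm xmn]|]; [exists m | exists 0].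
  pose nx n := epsilon (inhabits 0) (fun m => N <= n -> n < m /\ le (x m) (x n)).
  have nxP n : N <= n -> n < nx n /\ le (x (nx n)) (x n) := epsilon_spec _ _ (next n).
  have idx_ge k : N <= iter k nx N.
    by elim: k => // k IH; rewrite iterS; apply: leq_trans IH (ltnW (nxP _ IH).1).
  apply: le_wf; exists (fun k => x (iter k nx N)) => k; rewrite iterS.
  by have [lt_nx le_nx] := nxP _ (idx_ge k); split=> //; apply: x_bad.
move=> /not_ex_all_not not_down.
have up N : exists n, N <= n /\ forall m, n < m -> ~ le (x m) (x n).
  apply: NNPP => no_n; apply: (not_down N) => n Nn; apply: NNPP => no_m.
  by apply: no_n; exists n; split=> // m nm xmn; apply: no_m; exists m.
pose t N := epsilon (inhabits 0) (fun n => N <= n /\ forall m, n < m -> ~ le (x m) (x n)).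
have tP N : N <= t N /\ forall m, t N < m -> ~ le (x m) (x (t N)) := epsilon_spec _ _ (up N).
have t_incr : increasing (climb t) by apply: climb_increasing => N; case: (tP N).
apply: le_no_antichain; exists (x \o climb t) => i j /eqP; rewrite neq_ltn => /orP[] ij /=.
  by apply: x_bad; rewrite (increasing_ltE t_incr).
have [J eqJ] := climb_range t j; rewrite eqJ; apply: (tP J).2.
by rewrite -eqJ (increasing_ltE t_incr).
Qed.

Lemma wqo_antichain_finite (S : T -> Prop) : (forall a b, S a -> S b -> a = b \/ ~ le a b) ->
  exists L : seq T, forall a, S a -> List.In a L.
Proof.
move=> S_antichain; apply: NNPP => /not_ex_all_not S_infinite.
have fresh L : exists a, S a /\ ~ List.In a L.
  by have [a not_a] := not_all_ex_not _ _ (S_infinite L); exists a; apply: imply_to_and.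
have [a0 _] := fresh [::].
pose g L := epsilon (inhabits a0) (fun a => S a /\ ~ List.In a L).
have gP L : S (g L) /\ ~ List.In (g L) L := epsilon_spec _ _ (fresh L).
pose fix prev n := if n is n'.+1 then g (prev n') :: prev n' else [::].
have prev_in i j : i < j -> List.In (g (prev i)) (prev j).
  by elim: j => // j IH; rewrite ltnS leq_eqVlt => /predU1P[->|/IH]; [left | right].
have g_neq i j : i < j -> g (prev i) <> g (prev j).
  by move=> ij eq_g; apply: (gP (prev j)).2; rewrite -eq_g; apply: prev_in.
apply: le_wqo.2; exists (fun n => g (prev n)) => i j /eqP; rewrite neq_ltn => ij.
case: (S_antichain (g (prev i)) (g (prev j)) (gP _).1 (gP _).1) => // eq_ij _.
by case/orP: ij => ij; [apply: g_neq ij eq_ij | apply: g_neq ij (esym eq_ij)].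
Qed.

Lemma wqo_clopen_shift_fixed (F : (nat -> nat) -> T) W : increasing W -> clopen_map F W ->
  (forall Z Z', infsub Z W -> infsub Z' W -> F Z = F Z' \/ ~ le (F Z) (F Z')) ->
  exists2 Z, infsub Z W & F Z = F (shift Z).
Proof.
move=> W_incr F_clopen F_antichain.
case: (@wqo_antichain_finite (fun a => exists2 Z, infsub Z W & a = F Z)) => [|L L_range].
  by move=> _ _ [Z ZW ->] [Z' Z'W ->]; apply: F_antichain.
apply: (clopen_finite_range_shift_fixed (L := L) W_incr F_clopen) => Z ZW.
by apply: L_range; exists Z.
Qed.

End Wqo.
End Orders.

(** * No bad clopen map into a (2+2)-free wqo *)

Section BadClopenMap.
Variables (T : Type) (le : T -> T -> Prop).
Hypotheses (le_refl : forall x, le x x) (le_trans : forall x y z, le x y -> le y z -> le x z).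
Hypothesis le_anti : forall x y, le x y -> le y x -> x = y.
Hypotheses (le_22 : two_plus_two_free le) (le_wqo : wqo le).
Variables (h : (nat -> nat) -> T) (V : nat -> nat).
Hypotheses (V_incr : increasing V) (h_clopen : clopen_map h V).
Hypothesis h_bad : forall Z, infsub Z V -> ~ le (h Z) (h (shift Z)).

Definition prefix_determines W n := forall W', infsub W' V -> agree n W W' -> h W' = h W.

Definition modulus W := epsilon (inhabits 0)
  (fun n => prefix_determines W n /\ forall k, prefix_determines W k -> n <= k).

Lemma modulusP W : infsub W V ->
  prefix_determines W (modulus W) /\ forall k, prefix_determines W k -> modulus W <= k.
Proof.
move=> WV; have [p hp] := h_clopen WV.
exact: (epsilon_spec _ (fun n => _ /\ _) (@ex_minimal (prefix_determines W) (ex_intro _ p hp))).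
Qed.

Lemma modulus_agree W W' : infsub W V -> infsub W' V ->
  agree (modulus W) W W' -> modulus W' = modulus W.
Proof.
move=> WV W'V WW'; have [detW minW] := modulusP WV; have [detW' minW'] := modulusP W'V.
have hW' : h W' = h W by apply: detW.
have le_mod : modulus W' <= modulus W.
  by apply: minW' => W'' W''V W'W''; rewrite hW'; apply: detW => //; apply: agree_trans WW' W'W''.
apply/eqP; rewrite eqn_leq le_mod; apply: minW => W'' W''V WW''.
by rewrite -hW'; apply: detW' => //; apply: agree_trans (agree_sym (agreeW le_mod WW')) WW''.
Qed.

Lemma modulus_eqfun W W' : infsub W V -> W =1 W' -> modulus W' = modulus W.
Proof. by move=> WV eqW; apply: modulus_agree WV (infsub_eqfun WV eqW) _ => i _. Qed.

(* The invariant of the construction: below the fixed prefix [ws], the value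
   [h Z] is determined by fewer and fewer entries of Z as [ws] grows. *)
Definition reservoir ws Y := [/\ infsub Y V,
  forall Z, infsub Z Y -> infsub (prepend ws Z) V &
  forall Z Z', infsub Z Y -> infsub Z' Y ->
    agree (modulus (prepend ws Z) - size ws) Z Z' -> h Z = h Z'].

Lemma reservoir_nil : reservoir [::] V.
Proof.
split=> [|Z ZV|Z Z' ZV Z'V]; first exact: infsub_refl.
  exact: infsub_eqfun ZV (fsym (prepend_nil Z)).
rewrite (modulus_eqfun ZV (fsym (prepend_nil Z))) subn0 => ZZ'.
by symmetry; apply: (modulusP ZV).1.
Qed.

Definition upset_shift_sub Z := forall y, strict le (h (shift Z)) y -> strict le (h Z) y.

(* Otherwise the strict up-sets of the values of h along the tails of Y,
   which form a chain since le is (2+2)-free, would strictly grow forever. *)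
Lemma upset_shift_sub_somewhere Y : infsub Y V -> exists2 Z, infsub Z Y & upset_shift_sub Z.
Proof.
move=> YV; apply: NNPP => no_Z; pose x j := h (shiftn j Y).
have tail_sub j : infsub (shiftn j Y) Y := infsub_shiftn YV.1 j.
have hx j : h (shift (shiftn j Y)) = x j.+1.
  apply: (clopen_map_eqfun h_clopen (infsub_shiftn_sub j.+1 YV)) => i.
  by rewrite /shift /shiftn addSn addnS.
have grow j y : strict le (x j) y -> strict le (x j.+1) y.
  case: (two_plus_two_free_upsets_total le_22 (x j) (x j.+1)) => [grow_j|shrink].
    exact: grow_j.
  by case: no_Z; exists (shiftn j Y); rewrite // /upset_shift_sub hx.
have new j : exists y, strict le (x j.+1) y /\ ~ strict le (x j) y.
  apply: NNPP => no_y; apply: no_Z; exists (shiftn j Y) => // y; rewrite hx => xy.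
  by apply: NNPP => not_xy; apply: no_y; exists y.
pose ys j := epsilon (inhabits (x 0)) (fun y => strict le (x j.+1) y /\ ~ strict le (x j) y).
have ysP j : strict le (x j.+1) (ys j) /\ ~ strict le (x j) (ys j) := epsilon_spec _ _ (new j).
have grow_le i j y : i <= j -> strict le (x i) y -> strict le (x j) y.
  elim: j => [|j IH]; first by rewrite leqn0 => /eqP->.
  by rewrite leq_eqVlt => /predU1P[->//|/IH grow_ij /grow_ij]; apply: grow.
apply: (wqo_not_bad le_wqo (x := ys)) => i j ij ys_ij.
apply: (ysP j).2; apply: (grow_le i.+1 j _ ij).
exact: strict_le_trans le_trans (ysP i).1 ys_ij.
Qed.

Lemma clopen_shift_prepend u R : (forall Z, infsub Z R -> infsub (prepend u Z) V) ->
  clopen_map (fun Z => h (shift (prepend u Z))) R.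
Proof.
move=> uRV; apply: (clopen_map_comp h_clopen (P := fun Z => shift (prepend u Z))); split.
  by move=> Z ZR; apply/infsub_shift_sub/uRV.
move=> Z p ZR; exists p.+1 => Z' Z'R ZZ' i ip.
by rewrite /shift (prepend_agree (s := u) ZZ') //; lia.
Qed.

Section Step.
Variables (ws : seq nat) (Y : nat -> nat).
Hypothesis ws_Y : reservoir ws Y.

Lemma reservoir_sub : infsub Y V. Proof. by case: ws_Y. Qed.

Lemma reservoir_prepend Z : infsub Z Y -> infsub (prepend ws Z) V.
Proof. by case: ws_Y => _ + _; apply. Qed.

Definition tail_modulus Z := modulus (prepend ws Z) - size ws.

Lemma reservoir_determines Z Z' : infsub Z Y -> infsub Z' Y ->
  agree (tail_modulus Z) Z Z' -> h Z = h Z'.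
Proof. by case: ws_Y => _ _; apply. Qed.

Lemma tail_modulus_agree Z Z' : infsub Z Y -> infsub Z' Y ->
  agree (tail_modulus Z) Z Z' -> tail_modulus Z' = tail_modulus Z.
Proof.
move=> ZY Z'Y ZZ'; rewrite /tail_modulus.
rewrite (modulus_agree (reservoir_prepend ZY) (reservoir_prepend Z'Y)) //.
by apply: (agreeW _ (prepend_agree (s := ws) ZZ')); rewrite -leq_subLR.
Qed.

Definition skip Z i := if i < tail_modulus Z then Z i else Z i.+1.

Definition skip_invisible Z := h (shift Z) = h (shift (skip Z)).

Lemma skip_sub Z : increasing Z -> infsub (skip Z) Z.
Proof.
move=> Z_incr; split=> i.
  rewrite /skip; case: (ltnP i.+1 (tail_modulus Z)) => [Si_lt|]; last first.
    by case: (ltnP i (tail_modulus Z)) => _ _; rewrite (increasing_ltE Z_incr).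
  by rewrite (ltn_trans (ltnSn i) Si_lt); apply: Z_incr.
by exists (if i < tail_modulus Z then i else i.+1); rewrite /skip; case: ifP.
Qed.

Lemma skip_prepend u Z : tail_modulus (prepend u Z) = size u ->
  skip (prepend u Z) =1 prepend u (shift Z).
Proof.
move=> tail_u i; rewrite /skip tail_u /prepend; case: (ltnP i (size u)) => // ui.
by rewrite ltnNge leqW //= /shift subSn.
Qed.

Lemma clopen_shift_skip : clopen_map (fun Z => h (shift (skip Z))) Y.
Proof.
have YV := reservoir_sub.
apply: (clopen_map_comp h_clopen (P := fun Z => shift (skip Z))); split.
  move=> Z ZY; apply: infsub_shift_sub; apply: infsub_trans (skip_sub ZY.1) _.
  exact: infsub_trans ZY YV.
move=> Z p ZY; exists (tail_modulus Z + p + 2) => Z' Z'Y ZZ'.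
have eq_tail : tail_modulus Z' = tail_modulus Z.
  by apply: tail_modulus_agree => //; apply: (agreeW _ ZZ'); lia.
by move=> i ip; rewrite /shift /skip eq_tail; case: ifP => _; apply: ZZ'; lia.
Qed.

Lemma shift_skip_prepend u Z : infsub (prepend u (shift Z)) V ->
  tail_modulus (prepend u Z) = size u ->
  h (shift (skip (prepend u Z))) = h (shift (prepend u (shift Z))).
Proof.
move=> uV tail_u; apply: (clopen_map_eqfun h_clopen (infsub_shift_sub uV)) => i.
by rewrite /shift (skip_prepend tail_u).
Qed.

Section Refinement.
Variable Y2 : nat -> nat.
Hypothesis Y2Y : infsub Y2 Y.

(* Freezing the first [tail_modulus Y2] entries of Y2 freezes the value of h;
   by [upset_shift_sub] and badness, the values of h after one shift are then
   pairwise equal or incomparable, so one of them survives a further shift. *)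
Lemma skip_invisible_somewhere : (forall Z, infsub Z Y2 -> upset_shift_sub Z) ->
  exists2 Z, infsub Z Y2 & skip_invisible Z.
Proof.
move=> upset_Y2; have Y2_incr := Y2Y.1; have Y2V := infsub_trans Y2Y reservoir_sub.
pose q := tail_modulus Y2; pose u := mkseq Y2 q.
have uY2 Z : infsub Z (shiftn q Y2) -> infsub (prepend u Z) Y2 := infsub_prepend_mkseq Y2_incr.
have uV Z : infsub Z (shiftn q Y2) -> infsub (prepend u Z) V.
  by move=> ZR; apply: infsub_trans (uY2 Z ZR) Y2V.
have uY Z : infsub Z (shiftn q Y2) -> infsub (prepend u Z) Y.
  by move=> ZR; apply: infsub_trans (uY2 Z ZR) Y2Y.
have h_u Z : infsub Z (shiftn q Y2) -> h (prepend u Z) = h Y2.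
  by move=> ZR; symmetry; apply: reservoir_determines Y2Y (uY Z ZR) (agree_prepend_mkseq _ _).
have [|Z ZR fixed] := wqo_clopen_shift_fixed le_wqo (increasing_shiftn Y2_incr q)
                                             (clopen_shift_prepend uV).
  move=> Z Z' ZR Z'R; set hZ := h _; set hZ' := h _.
  case: (classic (hZ = hZ')) => [|neq]; [by left | right=> le_ZZ'].
  have lt_ZZ' : strict le hZ hZ'.
    by split=> // le_Z'Z; apply/neq/le_anti.
  have [le_uZ' _] := upset_Y2 _ (uY2 Z ZR) _ lt_ZZ'.
  by apply: (h_bad (uV _ Z'R)); rewrite (h_u Z' Z'R) -(h_u Z ZR).
have tail_u : tail_modulus (prepend u Z) = size u.
  by rewrite size_mkseq; apply: tail_modulus_agree Y2Y (uY Z ZR) (agree_prepend_mkseq _ _).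
exists (prepend u Z); first exact: uY2.
by rewrite /skip_invisible (shift_skip_prepend (uV _ (infsub_shift_sub ZR)) tail_u).
Qed.

Hypothesis skip_invisible_Y2 : forall Z, infsub Z Y2 -> skip_invisible Z.

Lemma shift_prepend_constant u R :
  (forall Z, infsub Z R -> infsub (prepend u Z) Y2) ->
  (forall Z, infsub Z R -> tail_modulus (prepend u Z) = size u) ->
  forall Z1 Z2, infsub Z1 R -> infsub Z2 R ->
    h (shift (prepend u Z1)) = h (shift (prepend u Z2)).
Proof.
move=> uY2 tail_u; have Y2V := infsub_trans Y2Y reservoir_sub.
have uV Z : infsub Z R -> infsub (prepend u Z) V by move=> ZR; apply: infsub_trans (uY2 Z ZR) Y2V.
apply: (clopen_shift_invariant_constant (clopen_shift_prepend uV)) => Z ZR /=.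
rewrite (skip_invisible_Y2 (uY2 Z ZR)) shift_skip_prepend ?tail_u //.
exact/uV/infsub_shift_sub.
Qed.

(* Both tails after the first [tail_modulus W1] entries can be glued behind the
   same prefix, where h after one shift is constant. *)
Lemma shift_determined W1 W2 : infsub W1 Y2 -> infsub W2 Y2 ->
  agree (tail_modulus W1) W1 W2 -> h (shift W1) = h (shift W2).
Proof.
move=> W1Y2 W2Y2 W12; have Y2_incr := Y2Y.1; have Y2V := infsub_trans Y2Y reservoir_sub.
pose q := tail_modulus W1; pose u := mkseq W1 q.
have ex_r : exists r, ubound u <= Y2 r by exists (ubound u); apply: increasing_ge_id.
case: (ex_minnP ex_r) => r ub_r r_min.
have tailR W : infsub W Y2 -> agree q W1 W -> infsub (shiftn q W) (shiftn r Y2).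
  move=> WY2 W1W; split=> [|i]; first exact: (increasing_shiftn WY2.1 q).
  have [j eq_j] := WY2.2 (q + i); exists (j - r); rewrite /shiftn eq_j subnKC //.
  apply: r_min; apply: ubound_leq => _ /mem_mkseqP[k kq ->].
  by rewrite W1W // -eq_j (increasing_ltE WY2.1) ltn_addr.
have uY2 Z : infsub Z (shiftn r Y2) -> infsub (prepend u Z) Y2.
  move=> ZR; apply: infsub_prepend; last exact: infsub_trans ZR (infsub_shiftn Y2_incr r).
    apply: increasing_prepend; [exact: sorted_mkseq W1Y2.1 | exact: ZR.1 |].
    move=> x /ubound_gt/leq_trans; apply; have [j ->] := ZR.2 0.
    by apply: leq_trans ub_r _; rewrite /shiftn (increasing_leE Y2_incr) leq_addr.
  by move=> _ /mem_mkseqP[k _ ->]; apply: W1Y2.2.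
have tail_u Z : infsub Z (shiftn r Y2) -> tail_modulus (prepend u Z) = size u.
  move=> ZR; rewrite size_mkseq; apply: tail_modulus_agree (agree_prepend_mkseq _ _).
    exact: infsub_trans W1Y2 Y2Y.
  exact: infsub_trans (uY2 Z ZR) Y2Y.
have back W : infsub W Y2 -> agree q W1 W -> h (shift (prepend u (shiftn q W))) = h (shift W).
  move=> WY2 W1W; apply: (clopen_map_eqfun h_clopen (infsub_shift_sub (infsub_trans WY2 Y2V))).
  by move=> i; rewrite /shift (prepend_mkseq_shiftn W1W).
rewrite -(back W1) // -(back W2) //.
exact: shift_prepend_constant uY2 tail_u _ _ (tailR _ W1Y2 _) (tailR _ W2Y2 W12).
Qed.

Lemma reservoir_rcons_head : reservoir (rcons ws (Y2 0)) (shift Y2).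
Proof.
have Y2_incr := Y2Y.1; set w := Y2 0.
have wY2 Z : infsub Z (shift Y2) -> infsub (prepend [:: w] Z) Y2.
  move=> ZY2; apply: (@infsub_prepend_mkseq Y2 1 Z Y2_incr).
  by apply: infsub_eqfunr ZY2 _ => i; rewrite /shiftn add1n.
have wsV Z : infsub Z (shift Y2) -> infsub (prepend ws (prepend [:: w] Z)) V.
  by move=> ZY2; apply/reservoir_prepend/(infsub_trans (wY2 Z ZY2)).
split=> [|Z ZY2|Z Z' ZY2 Z'Y2].
- exact/infsub_shift_sub/(infsub_trans Y2Y reservoir_sub).
- exact: infsub_eqfun (wsV Z ZY2) (fsym (prepend_rcons1 ws w Z)).
rewrite (modulus_eqfun (wsV Z ZY2) (fsym (prepend_rcons1 ws w Z))) size_rcons subnS => ZZ'.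
have wZZ' : agree (tail_modulus (prepend [:: w] Z)) (prepend [:: w] Z) (prepend [:: w] Z').
  case=> [|i] i_lt //; rewrite /prepend /= !subn1 /=; apply: ZZ'.
  by rewrite /tail_modulus in i_lt; lia.
have := shift_determined (wY2 Z ZY2) (wY2 Z' Z'Y2) wZZ'.
have YV := infsub_trans Y2Y reservoir_sub; have shiftY2V := infsub_shift_sub YV.
rewrite (clopen_map_eqfun h_clopen (infsub_trans ZY2 shiftY2V) (fsym (shift_prepend1 w Z))).
by rewrite (clopen_map_eqfun h_clopen (infsub_trans Z'Y2 shiftY2V) (fsym (shift_prepend1 w Z'))).
Qed.

End Refinement.

Lemma reservoir_rcons : exists w Y', reservoir (rcons ws w) Y'.
Proof.
have YV := reservoir_sub; have h_Y := clopen_map_sub h_clopen YV.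
have [Y1 Y1Y [upset_Y1|no_upset]] := galvin_prikry YV.1
  (clopen_pred_rel (clopen_map_shift h_Y)
                   (fun a b => forall y, strict le a y -> strict le b y) h_Y).
  have h_Y1 := clopen_map_sub h_Y Y1Y.
  have [Y2 Y2Y1 [invisible|visible]] := galvin_prikry Y1Y.1
    (clopen_pred_rel (clopen_map_shift h_Y1) eq (clopen_map_sub clopen_shift_skip Y1Y)).
    by exists (Y2 0), (shift Y2); apply: reservoir_rcons_head (infsub_trans Y2Y1 Y1Y) invisible.
  have [Z ZY2 invZ] := skip_invisible_somewhere (infsub_trans Y2Y1 Y1Y)
                         (fun Z ZY2 => upset_Y1 Z (infsub_trans ZY2 Y2Y1)).
  by case: (visible Z ZY2).
by have [Z ZY1 upZ] := upset_shift_sub_somewhere (infsub_trans Y1Y YV); case: (no_upset Z ZY1).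
Qed.

End Step.

Definition next_reservoir (st : seq nat * (nat -> nat)) :=
  let p := epsilon (inhabits (0, V))
             (fun p => reservoir st.1 st.2 -> reservoir (rcons st.1 p.1) p.2) in
  (rcons st.1 p.1, p.2).

Lemma next_reservoirP st : reservoir st.1 st.2 ->
  reservoir (next_reservoir st).1 (next_reservoir st).2.
Proof.
move=> st_res; have [w [Y' res']] := reservoir_rcons st_res.
pose P p := reservoir st.1 st.2 -> reservoir (rcons st.1 p.1) p.2.
have exP : exists p, P p by exists (w, Y').
exact: (epsilon_spec (inhabits (0, V)) P exP st_res).
Qed.

Definition reservoirs k := iter k next_reservoir ([::], V).

Definition limit i := nth 0 (reservoirs i.+1).1 i.

Lemma reservoirsP k : reservoir (reservoirs k).1 (reservoirs k).2.
Proof. by elim: k => [|k IH]; [exact: reservoir_nil | exact: next_reservoirP]. Qed.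

Lemma reservoirs_prefix k : (reservoirs k).1 = mkseq limit k.
Proof.
have size_k j : size (reservoirs j).1 = j.
  by elim: j => // j IH; rewrite /reservoirs iterS /= size_rcons IH.
elim: k => // k IH; rewrite mkseqS -IH /limit /reservoirs iterS /=.
by rewrite nth_rcons size_k ltnn eqxx.
Qed.

Lemma limit_sub : infsub limit V.
Proof.
have resV k : infsub (prepend (reservoirs k).1 (reservoirs k).2) V.
  by case: (reservoirsP k) => Y_V resV _; apply/resV/infsub_refl/Y_V.1.
have limitE k i : i < k -> prepend (reservoirs k).1 (reservoirs k).2 i = limit i.
  by move=> ik; rewrite reservoirs_prefix -(@agree_prepend_mkseq limit k _ i ik).
split=> i; first by rewrite -(limitE i.+2 i) // -(limitE i.+2 i.+1) //; apply: (resV _).1.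
by rewrite -(limitE i.+1 i) //; apply: (resV _).2.
Qed.

(* At stage [modulus limit], the reservoir determines h from no entry at all. *)
Theorem no_bad_clopen_map : False.
Proof.
pose n := modulus limit; case: (reservoirsP n) => YV resV det.
set Y := (reservoirs n).2 in YV resV det; have Y_incr := YV.1.
have mod_n : modulus (prepend (reservoirs n).1 Y) = n.
  apply: modulus_agree limit_sub (resV _ (infsub_refl Y_incr)) _.
  by rewrite reservoirs_prefix; apply: agree_prepend_mkseq.
have := det Y (shift Y) (infsub_refl Y_incr) (infsub_shift Y_incr).
rewrite mod_n reservoirs_prefix size_mkseq subnn => hY.
have agree0 : agree 0 Y (shift Y) by move=> i; rewrite ltn0.
by apply: (h_bad YV); rewrite -(hY agree0); apply: le_refl.
Qed.

End BadClopenMap.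

(** * From barriers to clopen maps *)

Definition range (Z : nat -> nat) n := exists i, Z i = n.

Lemma sorted_leq_last (s : seq nat) y : sorted ltn s -> y \in s -> y <= last 0 s.
Proof.
case/lastP: s => // s x; rewrite last_rcons mem_rcons inE => s_sorted /predU1P[->//|ys].
exact/ltnW/(sorted_rcons_lt s_sorted).
Qed.

Lemma initial_segment_range Z s : increasing Z -> nonempty_initial_segment s (range Z) ->
  s = mkseq Z (size s) /\ 0 < size s.
Proof.
move=> Z_incr [s_sorted [s_nil [s_range s_closed]]].
have last_s : last 0 s \in s.
  by case: s s_nil {s_sorted s_range s_closed} => // y s _; apply: mem_last.
have [q Zq] := s_range _ last_s.
suff -> : s = mkseq Z q.+1 by rewrite size_mkseq.
apply: (irr_sorted_eq ltn_trans ltnn) => //; first exact: sorted_mkseq.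
move=> y; apply/idP/mem_mkseqP => [ys|[i iq ->]].
  have [i Zi] := s_range _ ys; exists i => //.
  by rewrite ltnS -(increasing_leE Z_incr) Zq Zi sorted_leq_last.
by apply: s_closed; [exists i | rewrite -Zq (increasing_leE Z_incr) -ltnS].
Qed.

Section BarrierMap.
Variables (T : Type) (le : T -> T -> Prop) (B : seq nat -> Prop).
Hypothesis B_barrier : barrier B.
Variable f : seq nat -> T.

Definition base n := exists s, B s /\ n \in s.

Lemma base_unbounded N : exists n, N <= n /\ base n.
Proof.
case: B_barrier => B_sorted [B_infinite _]; apply: NNPP => /not_ex_all_not bounded.
apply: B_infinite; exists (subseqs (iota 0 N)) => s Bs; rewrite mem_subseqs.
apply: sorted_subseq_iota (B_sorted s Bs) _ => x xs; rewrite ltnNge; apply/negP => Nx.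
by apply: (bounded x); split=> //; exists s.
Qed.

Definition next_base N := epsilon (inhabits 0) (fun n => N <= n /\ base n).

Definition base_enum := climb next_base.

Lemma next_baseP N : N <= next_base N /\ base (next_base N).
Proof. exact: (epsilon_spec _ (fun n => _ /\ _) (base_unbounded N)). Qed.

Lemma base_enum_increasing : increasing base_enum.
Proof. by apply: climb_increasing => N; case: (next_baseP N). Qed.

Lemma base_enum_base i : base (base_enum i).
Proof. by rewrite /base_enum; have [J ->] := climb_range next_base i; case: (next_baseP J). Qed.

Lemma barrier_seg_ex Z : infsub Z base_enum ->
  exists s, B s /\ nonempty_initial_segment s (range Z).
Proof.
case: B_barrier => _ [_ [_ B_segment]] Z_sub; apply: B_segment => [n|n [i <-]].
  by exists (Z n); split; [exact: increasing_ge_id Z_sub.1 n | exists n].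
by have [j ->] := Z_sub.2 i; apply: base_enum_base.
Qed.

Definition barrier_seg Z :=
  epsilon (inhabits [::]) (fun s => B s /\ nonempty_initial_segment s (range Z)).

Lemma barrier_segP Z : infsub Z base_enum ->
  B (barrier_seg Z) /\ barrier_seg Z = mkseq Z (size (barrier_seg Z)) /\ 0 < size (barrier_seg Z).
Proof.
move=> Z_sub; pose P s := B s /\ nonempty_initial_segment s (range Z).
have [B_seg seg] : P (barrier_seg Z) := epsilon_spec (inhabits [::]) P (barrier_seg_ex Z_sub).
by split=> //; apply: initial_segment_range Z_sub.1 seg.
Qed.

Lemma barrier_mkseq_uniq Z a b : increasing Z -> B (mkseq Z a) -> B (mkseq Z b) ->
  0 < a -> 0 < b -> a = b.
Proof.
case: B_barrier => _ [_ [B_antichain _]] Z_incr.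
suff le_eq a' b' : B (mkseq Z a') -> B (mkseq Z b') -> a' <= b' -> 0 < b' -> a' = b'.
  by move=> Ba Bb a0 b0; case: (leqP a b) => [ab|/ltnW ba]; [apply: le_eq | symmetry; apply: le_eq].
move=> Ba Bb ab b0; apply/eqP; rewrite eqn_leq ab /=.
have sub_ab : {subset mkseq Z a' <= mkseq Z b'}.
  by move=> _ /mem_mkseqP[i ia ->]; apply: mkseq_f (leq_trans ia ab).
have lt_pred : b'.-1 < b' by rewrite ltn_predL.
have /mem_mkseqP[i ia /(increasing_inj Z_incr) eq_i] :=
  B_antichain _ _ Ba Bb sub_ab (Z b'.-1) (mkseq_f Z lt_pred).
by rewrite -(prednK b0) eq_i.
Qed.

Definition induced_map Z := f (barrier_seg Z).

Lemma induced_map_clopen : clopen_map induced_map base_enum.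
Proof.
move=> Z Z_sub; have [BZ [eqZ Z0]] := barrier_segP Z_sub.
exists (size (barrier_seg Z)) => Z' Z'_sub ZZ'; have [BZ' [eqZ' Z'0]] := barrier_segP Z'_sub.
have eqZZ' : barrier_seg Z = mkseq Z' (size (barrier_seg Z)) by rewrite {1}eqZ (mkseq_agree ZZ').
rewrite eqZZ' in BZ; rewrite eqZ' in BZ'.
have eq_size := barrier_mkseq_uniq Z'_sub.1 BZ BZ' Z0 Z'0.
by rewrite /induced_map eqZ' -eq_size -eqZZ'.
Qed.

Lemma barrier_seg_size_shift Z : infsub Z base_enum ->
  size (barrier_seg Z) <= size (barrier_seg (shift Z)).
Proof.
case: B_barrier => _ [_ [B_antichain _]] Z_sub.
have [BZ [eqZ Z0]] := barrier_segP Z_sub.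
have [BZ1 [eqZ1 _]] := barrier_segP (infsub_shift_sub Z_sub).
rewrite leqNgt; apply/negP => lt_ba.
have sub_ba : {subset barrier_seg (shift Z) <= barrier_seg Z}.
  rewrite {1}eqZ1 {1}eqZ => _ /mem_mkseqP[i ib ->].
  by rewrite /shift; apply: mkseq_f; apply: leq_ltn_trans ib lt_ba.
have Z0_in : Z 0 \in barrier_seg Z by rewrite eqZ mkseq_f.
have := B_antichain _ _ BZ1 BZ sub_ba _ Z0_in; rewrite {1}eqZ1.
by case/mem_mkseqP => i _ /(increasing_inj Z_sub.1).
Qed.

Lemma induced_map_bad : (forall s t, B s -> B t -> shift_rel s t -> ~ le (f s) (f t)) ->
  forall Z, infsub Z base_enum -> ~ le (induced_map Z) (induced_map (shift Z)).
Proof.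
move=> f_bad Z Z_sub; have [BZ [eqZ _]] := barrier_segP Z_sub.
have [BZ1 [eqZ1 _]] := barrier_segP (infsub_shift_sub Z_sub).
apply: f_bad => //; set a := size (barrier_seg Z); set b := size (barrier_seg (shift Z)).
exists (mkseq Z b.+1); split; first exact: sorted_mkseq Z_sub.1.
split; last split=> //.
  exists a; rewrite size_mkseq ltnS barrier_seg_size_shift //; split=> //.
  by rewrite eqZ /mkseq -map_take take_iota (minn_idPl _) // leqW // barrier_seg_size_shift.
rewrite eqZ1 /mkseq /= (iotaDl 1 0 b) -map_comp.
by apply: eq_map => x; rewrite /shift /= add1n.
Qed.

End BarrierMap.

Lemma interval_order_wqo_bqo T (le : T -> T -> Prop) : interval_order le -> wqo le -> bqo le.
Proof.
move=> le_io le_wqo B B_barrier f; apply: NNPP => f_bad.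
have [[[le_refl le_trans] le_anti] _] := le_io.
apply: (no_bad_clopen_map le_refl le_trans le_anti (interval_order_two_plus_two_free le_io) le_wqo
          (base_enum_increasing B_barrier) (induced_map_clopen B_barrier f)).
by apply: (induced_map_bad B_barrier) => s t Bs Bt st le_st; apply: f_bad; exists s, t.
Qed.

Definition singletons (s : seq nat) := exists n, s = [:: n].

Lemma singletons_barrier : barrier singletons.
Proof.
split; first by move=> _ [n ->].
split.
  move=> [l l_all]; pose n := ubound (map (head 0) l).
  have /(map_f (head 0)) /ubound_gt := l_all [:: n] (ex_intro _ n erefl).
  by rewrite ltnn.
split.
  by move=> _ _ [a ->] [b ->] /(_ a (mem_head _ _)); rewrite inE => /eqP->.
move=> X X_infinite _; have [n Xn] := X_infinite 0.
have [m [Xm m_min]] := @ex_minimal X (ex_intro _ n Xn.2).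
exists [:: m]; split; first by exists m.
split=> //; split=> //; split=> [x|x Xx /= xm]; first by rewrite inE => /eqP->.
by rewrite inE eqn_leq xm m_min.
Qed.

Lemma shift_rel_singletons i j : shift_rel [:: i] [:: j] -> i < j.
Proof.
move=> [r [r_sorted [[k [kr eq_s]] [_ eq_t]]]].
case: r r_sorted kr eq_s eq_t => [|x [|y [|z r]]] //= r_sorted kr eq_s [->].
by case: k kr eq_s => [|[|k]] //= _ [->]; case/andP: r_sorted.
Qed.

Lemma bqo_wqo T (le : T -> T -> Prop) : quasi_order le -> bqo le -> wqo le.
Proof.
move=> [_ le_trans] le_bqo.
have good_pair (g : nat -> T) : exists i j, i < j /\ le (g i) (g j).
  have [_ [_ [[i ->] [[j ->] [ij le_ij]]]]] := le_bqo _ singletons_barrier (fun s => g (head 0 s)).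
  by exists i, j; split=> //; apply: shift_rel_singletons.
split=> [[g g_desc]|[g g_antichain]]; have [i [j [ij le_ij]]] := good_pair g.
  suff : forall j, i < j -> ~ le (g i) (g j) by move/(_ j ij).
  elim=> // k IH; rewrite ltnS leq_eqVlt => /predU1P[<-|ik]; first exact: (g_desc i).2.
  by move=> le_ik; apply: (IH ik); apply: le_trans le_ik (g_desc k).1.
by apply: (g_antichain i j) => // eq_ij; rewrite eq_ij ltnn in ij.
Qed.

Theorem theorem1p6 (T : Type) (le : T -> T -> Prop) :
  interval_order le -> (bqo le <-> wqo le).
Proof.
move=> le_io; split; last exact: interval_order_wqo_bqo.
by apply: bqo_wqo; case: le_io => [[]].
Qed.
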